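(* Let $n\ge1$, $m=2^n$, let $\mathcal{B}$ be the boolean algebra of rank $r\ge1$, and let $A\subsetneq\{0,1\}^n$ with $a=|A|$. If $m-a\le r$, then the solution set $Y=V_{\mathcal{B}}(S_A)$ of the orthogonal system $S_A$ is irreducible over $\mathcal{B}$.
   Context: A finite boolean algebra of rank $r$ is (isomorphic to) the power set algebra of an $r$-element set, in the language $\{\vee,\cdot,\bar{\ },0,1\}$. Orthogonal variables: $Z=\{z_\alpha:\alpha\in\{0,1\}^n\}$, $|Z|=m=2^n$. For $A\subseteq\{0,1\}^n$ the orthogonal system is $$S_A=\{z_\alpha=0\mid\alpha\in A\}\cup\{z_\alpha z_\beta=0\mid \alpha\ne\beta\}\cup\{\textstyle\bigvee_{\alpha}z_\alpha=1\}.$$ $V_{\mathcal{B}}(S)\subseteq\mathcal{B}^m$ is the solution set of $S$. A subset of $\mathcal{B}^m$ is algebraic if it is the solution set of some system of equations $t=s$ ($t,s$ terms in $Z$). A nonempty algebraic set is irreducible if it is not a finite union of proper algebraic subsets. *)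

From HB Require Import structures.
From mathcomp Require Import all_boot.
Set Implicit Arguments. Unset Strict Implicit. Unset Printing Implicit Defensive.

Inductive term (V : Type) : Type :=
| TVar  of V
| TJoin of term V & term V
| TMeet of term V & term V
| TCompl of term V
| TZero
| TOne.
Arguments TZero {V}.
Arguments TOne {V}.

(* The boolean algebra of rank r: the power-set algebra of an r-element set,
   represented as {set 'I_r}. *)
Definition BA (r : nat) := {set 'I_r}.

(* Points of B^Z: assignments of elements of B to the variables. *)
Definition point (V : finType) (r : nat) := {ffun V -> {set 'I_r}}.

Fixpoint eval (V : finType) (r : nat) (p : point V r) (t : term V) : {set 'I_r} :=
  match t with
  | TVar v => p v
  | TJoin t1 t2 => eval p t1 :|: eval p t2
  | TMeet t1 t2 => eval p t1 :&: eval p t2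
  | TCompl t1 => ~: eval p t1
  | TZero => set0
  | TOne => setT
  end.

Definition equation (V : Type) := (term V * term V)%type.
Definition system (V : Type) := equation V -> Prop.

Definition pset (V : finType) (r : nat) := point V r -> Prop.
Definition pset_eq (V : finType) (r : nat) (X Y : pset V r) : Prop :=
  forall p, X p <-> Y p.
Definition pset_sub (V : finType) (r : nat) (X Y : pset V r) : Prop :=
  forall p, X p -> Y p.
Definition pset_proper (V : finType) (r : nat) (X Y : pset V r) : Prop :=
  pset_sub X Y /\ ~ pset_eq X Y.
Definition pset_nonempty (V : finType) (r : nat) (Y : pset V r) : Prop :=
  exists p, Y p.
Definition pset_bigcup (V : finType) (r k : nat) (F : 'I_k -> pset V r) : pset V r :=
  fun p => exists i, F i p.

Definition solset (V : finType) (r : nat) (S : system V) : pset V r :=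
  fun p => forall e, S e -> eval p e.1 = eval p e.2.

Definition algebraic (V : finType) (r : nat) (Y : pset V r) : Prop :=
  exists S : system V, pset_eq Y (solset S).

Definition irreducible (V : finType) (r : nat) (Y : pset V r) : Prop :=
  algebraic Y /\ pset_nonempty Y /\
  forall (k : nat) (F : 'I_k -> pset V r),
    (forall i, algebraic (F i) /\ pset_proper (F i) Y) ->
    ~ pset_eq (pset_bigcup F) Y.

(* Index set {0,1}^n of the orthogonal variables z_alpha. *)
Definition cube (n : nat) := {ffun 'I_n -> bool}.

Definition join_all (V : finType) : term V :=
  foldr (fun v t => TJoin (TVar v) t) TZero (enum V).

Definition orth_system (n : nat) (A : {set cube n}) : system (cube n) :=
  fun e =>
    (exists2 al, al \in A & e = (TVar al, TZero)) \/
    (exists al be, al != be /\ e = (TMeet (TVar al) (TVar be), TZero)) \/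
    e = (join_all (cube n), TOne).

(* Every equation is checked coordinatewise: an element i of the r-element set
   gives the boolean point "column i" of p, and p satisfies t = s iff every
   column does.  A solution of S_A is exactly a point whose columns are
   singletons [set b] with b outside A.  Since at most r values b occur, a
   single solution q has all of them among its columns; any system satisfied
   by q is then satisfied by every solution, so q lies in no proper algebraic
   subset of Y, and Y cannot be a finite union of such subsets. *)
From mathcomp Require Import all_boot.

Set Implicit Arguments.
Unset Strict Implicit.
Unset Printing Implicit Defensive.

Definition column (V : finType) (r : nat) (p : point V r) (i : 'I_r) : {set V} :=
  [set v | i \in p v].

Lemma eval_column (V : finType) (r r' : nat) (p : point V r) (q : point V r')
    (i : 'I_r) (j : 'I_r') :
  column p i = column q j -> forall t, (i \in eval p t) = (j \in eval q t).
Proof.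
move=> /setP eq_col; have {}eq_col v : (i \in p v) = (j \in q v).
  by have := eq_col v; rewrite !inE.
elim=> /= [v | t1 IH1 t2 IH2 | t1 IH1 t2 IH2 | t IH | |].
- exact: eq_col.
- by rewrite !in_setU IH1 IH2.
- by rewrite !in_setI IH1 IH2.
- by rewrite !in_setC IH.
- by rewrite !in_set0.
- by rewrite !in_setT.
Qed.

Lemma solset_columns (V : finType) (r r' : nat) (S : system V)
    (p : point V r) (q : point V r') :
  (forall i, exists j, column p i = column q j) -> solset S q -> solset S p.
Proof.
move=> cols solq e Se; apply/setP => i; have [j col_ij] := cols i.
by rewrite !(eval_column col_ij) (solq e Se).
Qed.

Lemma irreducible_of_generic_point (V : finType) (r : nat) (Y : pset V r)
    (q : point V r) :
  algebraic Y -> Y q -> (forall S, solset S q -> pset_sub Y (solset S)) ->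
  irreducible Y.
Proof.
move=> algY Yq generic; do 2![split=> //]; first by exists q.
move=> k F HF cover; have [i Fq] := proj2 (cover q) Yq.
have [[S eqFS] [subFY neqFY]] := HF i.
apply: neqFY => p; split; first exact: subFY.
by move=> /(generic S (proj1 (eqFS q) Fq)) /eqFS.
Qed.

Lemma in_eval_join_all (V : finType) (r : nat) (p : point V r) (i : 'I_r) :
  (i \in eval p (join_all V)) = [exists v, i \in p v].
Proof.
rewrite /join_all; have -> : [exists v, i \in p v] = has (fun v => i \in p v) (enum V).
  by apply/existsP/hasP => [[v iv] | [v _ iv]]; exists v; rewrite ?mem_enum.
by elim: (enum V) => [|v s IH] /=; rewrite ?in_set0 // in_setU IH.
Qed.

Lemma orth_solsetP (n r : nat) (A : {set cube n}) (p : point (cube n) r) :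
  solset (orth_system A) p <->
  forall i, exists2 b, b \notin A & column p i = [set b].
Proof.
split=> [solp i | cols].
  have zeroA al : al \in A -> p al = set0.
    by move=> Aal; apply: (solp (TVar al, TZero)); left; exists al.
  have disj al be : al != be -> p al :&: p be = set0.
    by move=> neq; apply: (solp (TMeet (TVar al) (TVar be), TZero)); right; left; exists al, be.
  have : i \in eval p (join_all (cube n)).
    by rewrite (solp (join_all (cube n), TOne)) ?inE //; right; right.
  rewrite in_eval_join_all => /existsP [b ib]; exists b.
    by apply: contraL ib => /zeroA ->; rewrite inE.
  apply/setP => v; rewrite !inE; have [<- // | neq] := eqVneq b v.
  apply/negbTE/negP => iv.
  by have /setP/(_ i) := disj b v neq; rewrite !inE ib iv.
move=> e [[al Aal ->] | [[al [be [neq ->]]] | ->]] /=; apply/setP => i.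
- have [b nAb /setP/(_ al)] := cols i; rewrite !inE => ->.
  by apply/negbTE; apply: contraNN nAb => /eqP <-.
- have [b _ /setP col] := cols i; have := col al; have := col be; rewrite !inE.
  by move=> -> ->; apply/negbTE; apply: contra neq => /andP [/eqP -> /eqP ->].
- have [b _ /setP/(_ b)] := cols i; rewrite !inE eqxx in_eval_join_all => ib.
  by apply/existsP; exists b.
Qed.

Definition cover_point (V : finType) (r : nat) (x0 : V) (s : seq V) : point V r :=
  [ffun v => [set j : 'I_r | nth x0 s j == v]].

Lemma column_cover_point (V : finType) (r : nat) (x0 : V) (s : seq V) (j : 'I_r) :
  column (cover_point r x0 s) j = [set nth x0 s j].
Proof. by apply/setP => v; rewrite !inE ffunE inE eq_sym. Qed.

Lemma cover_point_covers (V : finType) (r : nat) (x0 : V) (s : seq V) (b : V) :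
  (size s <= r)%N -> b \in s -> exists j, column (cover_point r x0 s) j = [set b].
Proof.
move=> le_sr sb; have lt_br : (index b s < r)%N by rewrite (leq_trans _ le_sr) ?index_mem.
by exists (Ordinal lt_br); rewrite column_cover_point nth_index.
Qed.

Theorem lemma1 (n r : nat) (A : {set cube n}) :
  (1 <= n)%N -> (1 <= r)%N ->
  A \proper [set: cube n] ->
  (2 ^ n - #|A| <= r)%N ->
  irreducible (@solset (cube n) r (orth_system A)).
Proof.
move=> _ _ /properP [_ [a0 _ nAa0]] le_r; set s := enum (~: A).
have mem_s b : (b \in s) = (b \notin A) by rewrite mem_enum inE.
have le_sr : (size s <= r)%N.
  by rewrite -cardE -(leq_add2l #|A|) cardsC card_ffun card_bool card_ord -leq_subLR.
have solq : solset (orth_system A) (cover_point r a0 s).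
  apply/orth_solsetP => j; exists (nth a0 s j); last exact: column_cover_point.
  by rewrite -mem_s; case: (ltnP j (size s)) => [/mem_nth | /(nth_default a0)] ->; rewrite ?mem_s.
apply: (irreducible_of_generic_point _ solq) => [|S solqS p /orth_solsetP colp].
  by exists (orth_system A).
apply: solset_columns solqS => i; have [b nAb ->] := colp i.
have sb : b \in s by rewrite mem_s.
by have [j <-] := cover_point_covers a0 le_sr sb; exists j.
Qed.
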